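(* Let $p$ be an odd prime, $n\ge1$, $r>t\ge0$ integers and $c\in\mathbb{F}_p^*$. If $f(x)=\mathrm{Tr}_n(cx^{p^r+1}-cx^{p^t+1})$ with $\gcd(n,r+t)=\gcd(n,r-t)=\gcd(n,p)=1$, then the kernel in $\mathbb{F}_{p^n}$ of the linearized polynomial $L(z)=c\big(z+z^{p^{2r}}-z^{p^{r-t}}-z^{p^{r+t}}\big)$ corresponding to $f$ is $\mathbb{F}_p$. If $f(x)=\mathrm{Tr}_n(cx^{p^r+1}+cx^{p^t+1})$ with $\gcd(n,2(r+t))=\gcd(n,2(r-t))=2$, $r-t$ odd and $\gcd(n,p)=1$, then the kernel in $\mathbb{F}_{p^n}$ of the corresponding linearized polynomial $L(z)=c\big(z+z^{p^{2r}}+z^{p^{r-t}}+z^{p^{r+t}}\big)$ is the set of roots of $z^p+z$, all of which lie in $\mathbb{F}_{p^2}$.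
   Context: $\mathrm{Tr}_n$ denotes the absolute trace $\mathbb{F}_{p^n}\to\mathbb{F}_p$. The kernel of $L$ means $\{z\in\mathbb{F}_{p^n}: L(z)=0\}$. *)

From HB Require Import structures.
From mathcomp Require Import all_boot all_order all_algebra all_field.
Set Implicit Arguments. Unset Strict Implicit. Unset Printing Implicit Defensive.
Import GRing.Theory.
Local Open Scope ring_scope.

Definition primeSubfield (F : finFieldType) (p : nat) : {set F} :=
  [set (k%:R : F) | k : 'I_p].

Definition kernel (F : finFieldType) (L : F -> F) : {set F} :=
  [set z : F | L z == 0].

Definition Lminus (F : finFieldType) (p r t : nat) (c : F) (z : F) : F :=
  c * (z + z ^+ (p ^ (2 * r)) - z ^+ (p ^ (r - t)) - z ^+ (p ^ (r + t))).

Definition Lplus (F : finFieldType) (p r t : nat) (c : F) (z : F) : F :=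
  c * (z + z ^+ (p ^ (2 * r)) + z ^+ (p ^ (r - t)) + z ^+ (p ^ (r + t))).

(* Write frob k for z |-> z^(p^k), a = r - t and b = r + t, so a + b = 2r.
   Both linearized polynomials are c times
     twisted s a b = (frob b - s) o (frob a - s),   with s = 1 resp. s = -1.
   The key fact (twisted_kernel) is that, when the s-eigenvectors of frob a
   and of frob b are those of frob 1 (eigen_descends) and p does not divide
   n, the roots of twisted s a b are exactly the solutions of z^p = s z.
   The gcd hypotheses give eigen_descends: for s = 1 since frob k and
   frob (gcd n k) have the same fixed points, for s = -1 since
   gcd(n, 2k) = 2 with k odd.  The solution sets are then identified and
   counted through the fact that a divisor of X^|F| - X has as many roots
   in F as its degree: this shows that F_p is the set of roots of X^p - X,
   and that X^p + X has p roots when n is even. *)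

From HB Require Import structures.
From mathcomp Require Import all_boot all_order all_algebra all_field.
From mathcomp Require Import ring zify.
Import GRing.Theory.
Set Implicit Arguments. Unset Strict Implicit.
Local Open Scope ring_scope.

(* A polynomial dividing X^|F| - X = prod_(x in F) (X - x) has exactly
   deg P distinct roots in F. *)
Lemma card_roots_dvd_genPoly (F : finFieldType) (P : {poly F}) :
  P %| 'X^#|F| - 'X -> #|[set z | root P z]| = (size P).-1.
Proof.
rewrite finField_genPoly -big_enum => /dvdp_prod_XsubC[m P_eq].
have uniq_m : uniq (mask m (enum F)) by rewrite mask_uniq ?enum_uniq.
have -> : [set z | root P z] = [set z in mask m (enum F)].
  by apply/setP => z; rewrite !inE (eqp_root P_eq) root_prod_XsubC.
by rewrite cardsE (card_uniqP uniq_m) (eqp_size P_eq) size_prod_XsubC.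
Qed.

Section Frobenius.
Variables (F : finFieldType) (p : nat).
Hypotheses (p_prime : prime p) (pcharF : p \in [pchar F]).

Definition frob (k : nat) (z : F) : F := z ^+ (p ^ k).

Lemma frob0 z : frob 0 z = z.
Proof. by rewrite /frob expn0 expr1. Qed.

Lemma frob1 z : frob 1 z = z ^+ p.
Proof. by rewrite /frob expn1. Qed.

Lemma frobD i j z : frob (i + j) z = frob i (frob j z).
Proof. by rewrite /frob expnD mulnC exprM. Qed.

Lemma frobM k x y : frob k (x * y) = frob k x * frob k y.
Proof. by rewrite /frob exprMn. Qed.

Lemma pchar_nat_expp k : [pchar F].-nat (p ^ k)%N.
Proof. by rewrite pnatX pnatE // pcharF. Qed.

Lemma frob_add k x y : frob k (x + y) = frob k x + frob k y.
Proof. by rewrite /frob exprDn_pchar // pchar_nat_expp. Qed.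

Lemma frob_opp k x : frob k (- x) = - frob k x.
Proof. by rewrite /frob exprNn_pchar // pchar_nat_expp. Qed.

Lemma frob_sub k x y : frob k (x - y) = frob k x - frob k y.
Proof. by rewrite frob_add frob_opp. Qed.

Lemma frob_natr k m : frob k m%:R = m%:R.
Proof.
elim: m => [|m IHm]; first by rewrite /frob expr0n expn_eq0 eqn0Ngt prime_gt0.
by rewrite -natr1 frob_add IHm /frob expr1n.
Qed.

Lemma natr_neq0_coprime m : coprime m p -> m%:R != 0 :> F.
Proof. by rewrite -(dvdn_pcharf pcharF) coprime_sym prime_coprime. Qed.

Lemma frob_fixed_mul a z : frob a z = z -> forall j, frob (j * a) z = z.
Proof. by move=> fz; elim=> [|j IHj]; rewrite ?mul0n ?frob0 // mulSn frobD IHj. Qed.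

Lemma frob_parity z k : frob 2 z = z -> frob k z = frob (odd k) z.
Proof.
move=> f2z; have {1}-> : k = (odd k + k./2 * 2)%N by rewrite muln2 odd_double_half.
by rewrite frobD frob_fixed_mul.
Qed.

Lemma frob2_antifixed z : frob 1 z = - z -> frob 2 z = z.
Proof. by move=> f1z; rewrite (frobD 1 1) f1z frob_opp f1z opprK. Qed.

(* A divisor of X^(p^j) - X divides every X^(p^(j k)) - X, since
   X^(p^(j k + j)) - X = (X^(p^(j k)) - X)^(p^j) + (X^(p^j) - X) in
   characteristic p. *)
Lemma dvdp_frob_iter (d : {poly F}) j k :
  d %| 'X^(p ^ j) - 'X -> d %| 'X^(p ^ (j * k)) - 'X.
Proof.
move=> d_dvd; elim: k => [|k IHk]; first by rewrite muln0 expn0 subrr dvdp0.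
have pj_nat : [pchar {poly F}].-nat (p ^ j)%N.
  by rewrite (eq_pnat _ (@pchar_poly F)) pchar_nat_expp.
have -> : 'X^(p ^ (j * k.+1)) - 'X
    = ('X^(p ^ (j * k)) - 'X) ^+ (p ^ j) + ('X^(p ^ j) - 'X) :> {poly F}.
  by rewrite exprDn_pchar // exprNn_pchar // -exprM -expnD mulnS addnC addrA subrK.
by rewrite dvdp_add // dvdp_exp // expn_gt0 prime_gt0.
Qed.

Section FiniteOrder.
Variable n : nat.
Hypothesis cardF : #|F| = (p ^ n)%N.

Lemma frob_card z : frob n z = z.
Proof. by rewrite /frob -cardF expf_card. Qed.

Lemma frob_fixed_gcd a z : frob a z = z -> frob (gcdn n a) z = z.
Proof.
have n_gt0 : (0 < n)%N.
  by case: n cardF => // F1; have := finNzRing_gt1 F; rewrite F1.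
move=> faz; case: (egcdnP a n_gt0) => km kn Bezout _.
have: frob (kn * a + gcdn n a) z = z by rewrite -Bezout frob_fixed_mul ?frob_card.
by rewrite addnC frobD frob_fixed_mul.
Qed.

(* A Frobenius orbit cannot drift by a constant step: if frob a moves z by a
   frob a-invariant d, then after n steps it has moved by n * d, which must
   vanish; this forces d = 0 when p does not divide n. *)
Lemma frob_no_drift a z d : coprime n p ->
  frob a d = d -> frob a z = z + d -> d = 0.
Proof.
move=> np fad faz.
have drift j : frob (j * a) z = z + j%:R * d.
  elim: j => [|j IHj]; first by rewrite mul0n frob0 mul0r addr0.
  by rewrite mulSn frobD IHj frob_add frobM frob_natr fad faz -natr1; ring.
have /eqP := drift n; rewrite mulnC frob_fixed_mul ?frob_card //.
rewrite -subr_eq0 opprD addrA subrr sub0r oppr_eq0 mulf_eq0.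
by rewrite (negbTE (natr_neq0_coprime np)) => /eqP.
Qed.

Definition eigen_descends (k : nat) (s : F) : Prop :=
  forall x, frob k x = s * x <-> frob 1 x = s * x.

Lemma descends_fixed k : gcdn n k = 1%N -> eigen_descends k 1.
Proof.
move=> nk1 x; rewrite !mul1r; split=> [/frob_fixed_gcd|f1x]; first by rewrite nk1.
by rewrite -(muln1 k) frob_fixed_mul.
Qed.

Lemma descends_antifixed k : gcdn n (2 * k) = 2%N -> odd k -> eigen_descends k (-1).
Proof.
move=> nk2 k_odd x; rewrite !mulN1r; split=> [fkx | f1x].
  have f2x : frob 2 x = x.
    by rewrite -nk2 frob_fixed_gcd // mul2n -addnn frobD fkx frob_opp fkx opprK.
  by rewrite -fkx (frob_parity k f2x) k_odd.
by rewrite (frob_parity k (frob2_antifixed f1x)) k_odd.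
Qed.

(* The linearized polynomial z + z^(p^(a+b)) - s (z^(p^a) + z^(p^b)); when
   s^2 = 1 it is the composition (frob b - s) o (frob a - s). *)
Definition twisted (s : F) (a b : nat) (z : F) : F :=
  z + frob (a + b) z - s * (frob a z + frob b z).

Section Twisted.
Variables (s : F) (a b : nat).
Hypotheses (s_frob : frob 1 s = s) (s_sq : s * s = 1).
Hypotheses (descends_a : eigen_descends a s) (descends_b : eigen_descends b s).
Hypotheses (n_coprime_p : coprime n p) (p_odd : odd p).

(* For a root z, w := z - s z^(p^a) is an s-eigenvector of frob b, hence of
   frob 1 and of frob a; then frob (2a) moves z by the invariant step -2w, so
   w = 0 and z is an s-eigenvector of frob a, hence of frob 1. *)
Lemma twisted_kernel : [set z | twisted s a b z == 0] = [set z | frob 1 z == s * z].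
Proof.
have frob_s k : frob k s = s by rewrite -(muln1 k) frob_fixed_mul.
apply/setP => z; rewrite !inE; apply/eqP/eqP => [root_z | f1z]; last first.
  have faz := (descends_a z).2 f1z; have fbz := (descends_b z).2 f1z.
  by rewrite /twisted frobD fbz frobM frob_s faz; ring: s_sq.
have fabz : frob (a + b) z = s * (frob a z + frob b z) - z.
  by apply/eqP; rewrite -subr_eq0 -root_z /twisted; apply/eqP; ring.
move w_def : (z - s * frob a z) => w.
have fbw : frob b w = s * w.
  by rewrite -w_def frob_sub frobM frob_s -frobD addnC fabz; ring: s_sq.
have faw : frob a w = s * w by apply/descends_a/descends_b.
have faz : frob a z = s * (z - w) by rewrite -w_def; ring: s_sq.
have f2az : frob (a + a) z = z + - (w + w).
  by rewrite frobD faz frobM frob_s frob_sub faw faz; ring: s_sq.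
have f2aw : frob (a + a) w = w.
  by rewrite frobD faw frobM frob_s faw; ring: s_sq.
have w0 : w = 0.
  have step_fixed : frob (a + a) (- (w + w)) = - (w + w) by rewrite frob_opp frob_add f2aw.
  have /eqP := frob_no_drift n_coprime_p step_fixed f2az.
  have two_neq0 : 2%:R != 0 :> F by rewrite natr_neq0_coprime ?coprime2n.
  by rewrite oppr_eq0 -mulr2n -mulr_natl mulf_eq0 (negbTE two_neq0) => /eqP.
by apply/descends_a; rewrite faz w0 subr0.
Qed.

End Twisted.

Lemma card_frob_fixed : #|[set z : F | z ^+ p == z]| = p.
Proof.
have := dvdp_frob_iter n (dvdpp ('X^(p ^ 1) - 'X)).
rewrite mul1n expn1 -cardF => /card_roots_dvd_genPoly.
have -> : [set z | root ('X^p - 'X) z] = [set z : F | z ^+ p == z].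
  by apply/setP => z; rewrite !inE rootE !hornerE subr_eq0.
by rewrite size_polyDl ?size_polyXn // size_polyN size_polyX ltnS prime_gt1.
Qed.

(* F_p = {0, 1, ..., p-1} is the fixed field of the Frobenius: it lies in the
   fixed field, and both have p elements. *)
Lemma primeSubfield_frob : primeSubfield F p = [set z : F | z ^+ p == z].
Proof.
have sub : primeSubfield F p \subset [set z : F | z ^+ p == z].
  by apply/subsetP => _ /imsetP[k _ ->]; rewrite inE -frob1 frob_natr.
have card_Fp : #|primeSubfield F p| = p.
  rewrite card_imset ?card_ord // => k l kl; apply/val_inj.
  wlog le_kl : k l kl / (k <= l)%N.
    by move=> wlog_kl; case: (leqP k l) => [|/ltnW] /wlog_kl->.
  have: (l == k %[mod p])%N.
    by rewrite eqn_mod_dvd // (dvdn_pcharf pcharF) natrB // kl subrr.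
  by rewrite !modn_small // => /eqP.
by apply/eqP; rewrite eqEcard sub card_Fp card_frob_fixed /=.
Qed.

(* For n even, X^p + X divides X^(p^2) - X = (X^p + X)^p - (X^p + X), hence
   X^|F| - X, so it has p roots in F. *)
Lemma card_frob_antifixed : ~~ odd n -> #|[set z : F | z ^+ p + z == 0]| = p.
Proof.
move=> n_even.
have p_nat : [pchar {poly F}].-nat p by rewrite (eq_pnat _ (@pchar_poly F)) pnatE.
have dvd2 : ('X^p + 'X : {poly F}) %| 'X^(p ^ 2) - 'X.
  have -> : 'X^(p ^ 2) - 'X = ('X^p + 'X) ^+ p - ('X^p + 'X) :> {poly F}.
    by rewrite exprDn_pchar // -exprM mulnn; ring.
  by rewrite dvdp_sub // dvdp_exp // prime_gt0.
have twice_half : (2 * n./2)%N = n.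
  by rewrite mul2n -[in RHS](odd_double_half n) (negbTE n_even).
have := dvdp_frob_iter n./2 dvd2; rewrite twice_half -cardF => /card_roots_dvd_genPoly.
have -> : [set z | root ('X^p + 'X) z] = [set z : F | z ^+ p + z == 0].
  by apply/setP => z; rewrite !inE rootE !hornerE.
by rewrite size_polyDl ?size_polyXn // size_polyX ltnS prime_gt1.
Qed.

End FiniteOrder.
End Frobenius.

Lemma kernel_Lminus (F : finFieldType) (p r t : nat) (c : F) :
  (t < r)%N -> c != 0 ->
  kernel (Lminus p r t c) = [set z | twisted p 1 (r - t) (r + t) z == 0].
Proof.
move=> lt_tr c0; apply/setP => z; rewrite !inE /Lminus mulf_eq0 (negbTE c0) /=.
have -> : (2 * r = r - t + (r + t))%N by lia.
by rewrite /twisted /frob mul1r opprD addrA.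
Qed.

Lemma kernel_Lplus (F : finFieldType) (p r t : nat) (c : F) :
  (t < r)%N -> c != 0 ->
  kernel (Lplus p r t c) = [set z | twisted p (-1) (r - t) (r + t) z == 0].
Proof.
move=> lt_tr c0; apply/setP => z; rewrite !inE /Lplus mulf_eq0 (negbTE c0) /=.
have -> : (2 * r = r - t + (r + t))%N by lia.
by rewrite /twisted /frob mulN1r opprK addrA.
Qed.

Theorem mainTheorem5 (F : finFieldType) (p n r t : nat) (c : F) :
  prime p -> odd p -> p \in [pchar F] -> (0 < n)%N -> #|F| = (p ^ n)%N ->
  (t < r)%N -> c \in primeSubfield F p -> c != 0 ->
  (* first case *)
  ((gcdn n (r + t) = 1%N -> gcdn n (r - t) = 1%N -> coprime n p ->
    kernel (Lminus p r t c) = primeSubfield F p)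
  /\
  (* second case *)
   (gcdn n (2 * (r + t)) = 2%N -> gcdn n (2 * (r - t)) = 2%N ->
    odd (r - t) -> coprime n p ->
    [/\ kernel (Lplus p r t c) = [set z : F | z ^+ p + z == 0],
        (forall z : F, z ^+ p + z = 0 -> z ^+ (p ^ 2) = z)
      & #|kernel (Lplus p r t c)| = p])).
Proof.
move=> p_prime p_odd pcharF _ cardF lt_tr _ c0.
split=> [nb1 na1 np | nb2 na2 a_odd np].
  have one_frob : frob p 1 (1 : F) = 1 by rewrite /frob expr1n.
  rewrite kernel_Lminus // (twisted_kernel p_prime pcharF cardF one_frob (mulr1 1)
    (descends_fixed cardF na1) (descends_fixed cardF nb1) np p_odd).
  by rewrite (primeSubfield_frob p_prime pcharF cardF); apply/setP => z; rewrite !inE mul1r frob1.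
have b_odd : odd (r + t).
  by rewrite -(subnK (ltnW lt_tr)) -addnA addnn oddD odd_double a_odd.
have mone_frob : frob p 1 (-1 : F) = -1 by rewrite frob_opp // /frob expr1n.
have mone_sq : -1 * -1 = 1 :> F by rewrite mulN1r opprK.
have kerE : kernel (Lplus p r t c) = [set z : F | z ^+ p + z == 0].
  have antifixed := descends_antifixed p_prime pcharF cardF.
  rewrite kernel_Lplus // (twisted_kernel p_prime pcharF cardF mone_frob mone_sq
    (antifixed _ na2 a_odd) (antifixed _ nb2 b_odd) np p_odd).
  by apply/setP => z; rewrite !inE mulN1r frob1 addr_eq0.
split=> // [z /eqP|].
  by rewrite addr_eq0 -frob1 => /eqP /(frob2_antifixed p_prime pcharF).
rewrite kerE (card_frob_antifixed p_prime pcharF cardF) // -dvdn2.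
by have := dvdn_gcdl n (2 * (r + t)); rewrite nb2.
Qed.
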